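(* Let $F$, $G$ and $\Pi\colon\Sigma_A\times I\to\Sigma_N\times I$ be as in the context. If $S\subset\Sigma_A\times I$ is an attracting strip with respect to $G$, then $\Pi(S)$ is an attracting bi-strip with respect to $F$. If $S\subset\Sigma_A\times I$ is a repelling strip with respect to $G$, then $F^{-1}$ is well defined on $\Pi(S)$ and $\Pi(S)$ is a repelling bi-strip with respect to $F$.
   Context: $I=[0,1]$, $R(x)=1-x$. $F(\xi,p)=(\sigma(\xi),f_{\xi_0}(p))$ on $\Sigma_N\times I$, $\Sigma_N=\{1,\ldots,N\}^{\mathbb Z}$, with $f_i$ $C^1$-diffeomorphisms onto their images. $\mathcal I_P$ / $\mathcal I_R$: indices of orientation preserving / reversing $f_i$. $A=(a_{ij})_{i,j=1}^{2N}$ with $a_{ij}=1$ if ($i\in\mathcal I_P$, $j\le N$), or ($i\in\mathcal I_R$, $j>N$), or ($i-N\in\mathcal I_P$, $j>N$), or ($i-N\in\mathcal I_R$, $j\le N$), else $0$; $\Sigma_A$ the $A$-admissible sequences in $\{1,\ldots,2N\}^{\mathbb Z}$ with shift $\sigma_A$; $\pi(\omega)_n=\overline{\omega_n}$ ($\overline i=i$ for $i\le N$, $\overline i=i-N$ otherwise). $G(\omega,x)=(\sigma_A(\omega),g_{\omega_0}(x))$ with $g_i=f_i$, $g_{i+N}=R\circ f_i\circ R$ ($i\in\mathcal I_P$), $g_i=R\circ f_i$, $g_{i+N}=f_i\circ R$ ($i\in\mathcal I_R$). $C=\{\omega\colon\omega_0\le N\}$; $\Pi(\omega,x)=(\pi(\omega),x)$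 if $\omega\in C$, $(\pi(\omega),R(x))$ otherwise. For a space $\Sigma$ (either $\Sigma_A$ or $\Sigma_N$) and functions $\varphi,\psi\colon\Sigma\to I$ with $\varphi(\omega)<\psi(\omega)$ for all $\omega$, the strip is $S_{\varphi,\psi}=\{(\omega,x)\colon\varphi(\omega)\le x\le\psi(\omega)\}$; a bi-strip is a union of two strips. For a step skew-product $H$ on $\Sigma\times I$, a (bi-)strip $S$ is attracting if $H(S)\subset\operatorname{int}(S)$, and repelling if $H^{-1}$ is defined on $S$ and $H^{-1}(S)\subset\operatorname{int}(S)$. *)

From HB Require Import structures.
From mathcomp Require Import all_boot all_order all_algebra.
From mathcomp Require Import all_classical all_reals all_analysis.
Set Implicit Arguments. Unset Strict Implicit. Unset Printing Implicit Defensive.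
Import Order.TTheory GRing.Theory Num.Theory.
Import numFieldNormedType.Exports.
Local Open Scope classical_set_scope.
Local Open Scope ring_scope.

(* Symbols {1,..,N} are encoded as 'I_N = {0,..,N-1};
   symbols {1,..,2N} as 'I_(N + N), where the first block (lshift) is
   {1,..,N} and the second block (rshift) is {N+1,..,2N}. *)

Section Defs.
Variable R : realType.

Definition inI (x : R) : Prop := 0 <= x <= 1.
Definition refl (x : R) : R := 1 - x.

Definition C1_diffeo_onto_image (f : R -> R) : Prop :=
  (forall x, inI x -> inI (f x)) /\
  {in `[0, 1] &, injective f} /\
  (forall x, inI x -> derivable f x 1) /\
  {within `[0, 1], continuous (derive1 f)} /\
  (forall x, inI x -> derive1 f x != 0).

Definition orientation_preserving (f : R -> R) : Prop :=
  forall x y, inI x -> inI y -> x < y -> f x < f y.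
Definition orientation_reversing (f : R -> R) : Prop :=
  forall x y, inI x -> inI y -> x < y -> f y < f x.

Definition pt (T : Type) := ((int -> T) * R)%type.

Definition shift (T : Type) (w : int -> T) : int -> T := fun n => w (n + 1).

(* The ambient space {(w,x) | D w, x in I}, D describing the admissible
   sequences (D = setT for Sigma_N, D = A-admissible for Sigma_A). *)
Definition space (T : Type) (D : set (int -> T)) : set (pt T) :=
  [set z | D z.1 /\ inI z.2].

(* Interior relative to the space (product topology: cylinders around
   coordinates -n..n times open intervals). *)
Definition rel_interior (T : Type) (D : set (int -> T)) (S : set (pt T))
  : set (pt T) :=
  [set z | space D z /\
     exists (n : nat) (e : R), 0 < e /\
       forall z', space D z' ->
         (forall k : int, - (n%:Z) <= k <= n%:Z -> z'.1 k = z.1 k) ->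
         `|z'.2 - z.2| < e -> S z'].

Definition strip (T : Type) (D : set (int -> T)) (phi psi : (int -> T) -> R)
  : set (pt T) :=
  [set z | D z.1 /\ phi z.1 <= z.2 /\ z.2 <= psi z.1].

Definition strip_bounds (T : Type) (D : set (int -> T))
  (phi psi : (int -> T) -> R) : Prop :=
  forall w, D w -> inI (phi w) /\ inI (psi w) /\ phi w < psi w.

Definition is_strip (T : Type) (D : set (int -> T)) (S : set (pt T)) : Prop :=
  exists phi psi, strip_bounds D phi psi /\ S = strip D phi psi.

Definition is_bistrip (T : Type) (D : set (int -> T)) (S : set (pt T)) : Prop :=
  exists phi1 psi1 phi2 psi2,
    strip_bounds D phi1 psi1 /\ strip_bounds D phi2 psi2 /\
    S = strip D phi1 psi1 `|` strip D phi2 psi2.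

Definition attracting (T : Type) (D : set (int -> T)) (H : pt T -> pt T)
  (S : set (pt T)) : Prop :=
  H @` S `<=` rel_interior D S.

(* H^{-1} is defined on S (S lies in the image of the space under H, which
   is injective) and H^{-1}(S) = {z in space | H z in S} is in int(S). *)
Definition inverse_defined_on (T : Type) (D : set (int -> T))
  (H : pt T -> pt T) (S : set (pt T)) : Prop :=
  S `<=` H @` space D.

Definition repelling (T : Type) (D : set (int -> T)) (H : pt T -> pt T)
  (S : set (pt T)) : Prop :=
  inverse_defined_on D H S /\
  [set z | space D z /\ S (H z)] `<=` rel_interior D S.

Variable N : nat.

Definition bar (w : 'I_(N + N)) : 'I_N :=
  match fintype.split w with inl i => i | inr i => i end.
Definition upper (w : 'I_(N + N)) : bool :=
  match fintype.split w with inl _ => false | inr _ => true end.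

(* P i = true iff i in I_P (orientation preserving), false iff i in I_R. *)
Variable P : 'I_N -> bool.

Definition amat (i j : 'I_(N + N)) : bool :=
  [|| (~~ upper i && P (bar i) && ~~ upper j),
      (~~ upper i && ~~ P (bar i) && upper j),
      (upper i && P (bar i) && upper j) |
      (upper i && ~~ P (bar i) && ~~ upper j)].

Definition admissible : set (int -> 'I_(N + N)) :=
  [set w | forall n : int, amat (w n) (w (n + 1))].

Definition fullN : set (int -> 'I_N) := setT.

Variable f : 'I_N -> R -> R.

Definition F (z : pt 'I_N) : pt 'I_N := (shift z.1, f (z.1 0) z.2).

Definition gmap (w : 'I_(N + N)) : R -> R :=
  let i := bar w in
  if P i then (if upper w then refl \o f i \o refl else f i)
  else (if upper w then f i \o refl else refl \o f i).

Definition G (z : pt 'I_(N + N)) : pt 'I_(N + N) :=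
  (shift z.1, gmap (z.1 0) z.2).

Definition proj (w : int -> 'I_(N + N)) : int -> 'I_N := fun n => bar (w n).

Definition Pi (z : pt 'I_(N + N)) : pt 'I_N :=
  if upper (z.1 0) then (proj z.1, refl z.2) else (proj z.1, z.2).

End Defs.

From Pilot Require Import Defs.
From HB Require Import structures.
From mathcomp Require Import all_boot all_order all_algebra.
From mathcomp Require Import all_classical all_reals all_analysis.
From mathcomp Require Import zify lra.
Set Implicit Arguments. Unset Strict Implicit. Unset Printing Implicit Defensive.
Import Order.TTheory GRing.Theory Num.Theory.
Local Open Scope classical_set_scope.
Local Open Scope ring_scope.

(* An A-admissible sequence is determined by its projection and by its sheet
   at time 0 (omega_0 <= N or omega_0 > N), because the transition rule of A
   flips the sheet right after each orientation-reversing symbol.  Rebuilding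
   the sheets by this xor recurrence and reflecting the fibre on the upper
   sheet inverts Pi on each sheet; the recurrence only looks at the symbols in
   between, so the inverse maps cylinder neighbourhoods into cylinder
   neighbourhoods of the same size.  With Pi o G = F o Pi this carries
   interiors and the attracting and repelling inclusions down to
   Sigma_N x I, while a strip splits along the two sheets into two strips, the
   upper one reflected by R. *)

Section XorWalk.
Variable r : int -> bool.

Fixpoint xor_walk_pos (b : bool) (k : nat) : bool :=
  if k is k'.+1 then xor_walk_pos b k' (+) r k' else b.
Fixpoint xor_walk_neg (b : bool) (k : nat) : bool :=
  if k is k'.+1 then xor_walk_neg b k' (+) r (- k'.+1%:Z) else b.

Definition xor_walk (b : bool) (n : int) : bool :=
  match n with Posz k => xor_walk_pos b k | Negz k => xor_walk_neg b k.+1 end.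

Lemma xor_walk0 b : xor_walk b 0 = b. Proof. by []. Qed.

Lemma xor_walkS b m : xor_walk b (m + 1) = xor_walk b m (+) r m.
Proof.
case: m => [k|[|k]]; first by rewrite -PoszD addn1.
  by rewrite /= addbK.
have -> : Negz k.+1 + 1 = Negz k by rewrite !NegzE; lia.
by rewrite /= addbK.
Qed.

End XorWalk.

Lemma eq_on_xor_recurrence (u v r s : int -> bool) (n : nat) :
  u 0 = v 0 ->
  (forall m, u (m + 1) = u m (+) r m) -> (forall m, v (m + 1) = v m (+) s m) ->
  (forall m, - n%:Z <= m <= n%:Z -> r m = s m) ->
  forall m, - n%:Z <= m <= n%:Z -> u m = v m.
Proof.
move=> uv0 uS vS rs; elim/int_ind => [//|k IHk|k IHk] hk.
  have -> : k.+1%:Z = k%:Z + 1 by lia.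
  by rewrite uS vS IHk ?rs //; lia.
have back w t : (forall m, w (m + 1) = w m (+) t m) ->
    w (- k.+1%:Z) = w (- k%:Z) (+) t (- k.+1%:Z).
  move=> wS; have -> : - k%:Z = - k.+1%:Z + 1 by lia.
  by rewrite wS addbK.
by rewrite (back u r) // (back v s) // IHk ?rs //; lia.
Qed.

Section Symbols.
Variable N : nat.

Definition symb (i : 'I_N) (b : bool) : 'I_(N + N) :=
  unsplit (if b then inr i else inl i).

Lemma bar_symb i b : bar (symb i b) = i.
Proof. by rewrite /bar /symb unsplitK; case: b. Qed.

Lemma upper_symb i b : upper (symb i b) = b.
Proof. by rewrite /upper /symb unsplitK; case: b. Qed.

Lemma symb_bar_upper w : symb (bar w) (upper w) = w.
Proof. by rewrite /symb /bar /upper; case: (fintype.split w) (splitK w) => i <-. Qed.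

End Symbols.

Section Lift.
Variables (N : nat) (P : 'I_N -> bool).

Definition lift_seq (xi : int -> 'I_N) (b : bool) : int -> 'I_(N + N) :=
  fun n => symb (xi n) (xor_walk (fun m => ~~ P (xi m)) b n).

Lemma bar_lift_seq xi b n : bar (lift_seq xi b n) = xi n.
Proof. exact: bar_symb. Qed.

Lemma proj_lift_seq xi b : Defs.proj (lift_seq xi b) = xi.
Proof. by apply/funext => n; rewrite /Defs.proj bar_lift_seq. Qed.

Lemma upper_lift_seq0 xi b : upper (lift_seq xi b 0) = b.
Proof. by rewrite upper_symb xor_walk0. Qed.

Lemma lift_seq_admissible xi b : admissible P (lift_seq xi b).
Proof.
move=> n; rewrite /amat !upper_symb !bar_symb xor_walkS.
by case: xor_walk; case: (P (xi n)).
Qed.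

Lemma admissible_upperS w : admissible P w ->
  forall m, upper (w (m + 1)) = upper (w m) (+) ~~ P (bar (w m)).
Proof.
move=> adm_w m; move: (adm_w m); rewrite /amat.
by case: (upper (w m)); case: (P (bar (w m))); case: (upper (w (m + 1))).
Qed.

Lemma admissible_shift w : admissible P w -> admissible P (Defs.shift w).
Proof. by move=> adm_w n; exact: adm_w. Qed.

Lemma eq_on_lift_seq xi xi' b (n : nat) :
  (forall k, - n%:Z <= k <= n%:Z -> xi' k = xi k) ->
  forall k, - n%:Z <= k <= n%:Z -> lift_seq xi' b k = lift_seq xi b k.
Proof.
move=> xi'E k hk; rewrite /lift_seq xi'E //; congr symb.
by apply: (eq_on_xor_recurrence _ (xor_walkS _ _) (xor_walkS _ _) _ hk) => // m hm;
  rewrite xi'E.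
Qed.

Lemma admissible_lift_seqE w :
  admissible P w -> lift_seq (Defs.proj w) (upper (w 0)) = w.
Proof.
move=> adm_w; apply/funext => m; rewrite /lift_seq -[RHS]symb_bar_upper; congr symb.
apply: (eq_on_xor_recurrence (n := `|m|%N) _ (xor_walkS _ _)
  (admissible_upperS adm_w)) => //; lia.
Qed.

End Lift.

Section Reflection.
Variable R : realType.

Lemma reflK : involutive (@refl R).
Proof. by move=> x; rewrite /refl; lra. Qed.

Lemma inI_refl (x : R) : inI x -> inI (refl x).
Proof. by rewrite /inI /refl => /andP[? ?]; apply/andP; split; lra. Qed.

Lemma distr_refl (x y : R) : `|refl x - refl y| = `|x - y|.
Proof. by rewrite /refl distrC; congr `|_|; lra. Qed.

End Reflection.

Section Projection.
Variables (R : realType) (N : nat) (P : 'I_N -> bool) (f : 'I_N -> R -> R).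

Local Notation adm := (admissible P).
Local Notation full := (@fullN N).
Local Notation Pi := (@Pi R N).
Local Notation ptN := (pt R 'I_N).
Local Notation ptA := (pt R 'I_(N + N)).

Definition lift_pt (b : bool) (z : ptN) : ptA :=
  (lift_seq P z.1 b, if b then refl z.2 else z.2).

Lemma PiE (w : int -> 'I_(N + N)) (x : R) :
  Pi (w, x) = (Defs.proj w, if upper (w 0) then refl x else x).
Proof. by rewrite /Pi; case: (upper (w 0)). Qed.

Lemma Pi_lift_pt b (z : ptN) : Pi (lift_pt b z) = z.
Proof.
by case: z => xi x; rewrite PiE proj_lift_seq upper_lift_seq0; case: b; rewrite ?reflK.
Qed.

Lemma lift_ptK (z : ptA) : adm z.1 -> lift_pt (upper (z.1 0)) (Pi z) = z.
Proof.
case: z => w x /= adm_w; rewrite PiE /lift_pt /= admissible_lift_seqE //.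
by case: (upper (w 0)); rewrite ?reflK.
Qed.

Lemma Pi_inj (z z' : ptA) : adm z.1 -> adm z'.1 ->
  upper (z.1 0) = upper (z'.1 0) -> Pi z = Pi z' -> z = z'.
Proof.
move=> adm_z adm_z' up_zz' Pi_zz'.
by rewrite -(lift_ptK adm_z) -(lift_ptK adm_z') up_zz' Pi_zz'.
Qed.

Lemma space_lift_pt b (z : ptN) :
  Defs.space full z -> Defs.space adm (lift_pt b z).
Proof.
move=> [_ z2I]; split; first exact: lift_seq_admissible.
by case: b => //; exact: inI_refl.
Qed.

Lemma space_Pi (z : ptA) : Defs.space adm z -> Defs.space full (Pi z).
Proof.
by case: z => w x [_ xI]; rewrite PiE; split => //=; case: upper => //; exact: inI_refl.
Qed.

Lemma image_Pi (S : set ptA) : S `<=` [set z | adm z.1] ->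
  Pi @` S = [set z | exists b, S (lift_pt b z)].
Proof.
move=> S_adm; apply/seteqP; split => [_ [z Sz <-]|z [b Sbz]].
  by exists (upper (z.1 0)); rewrite lift_ptK //; exact: S_adm.
by exists (lift_pt b z); last exact: Pi_lift_pt.
Qed.

Lemma Pi_G (z : ptA) : adm z.1 -> Pi (G P f z) = F f (Pi z).
Proof.
case: z => w x /= adm_w; rewrite /G !PiE /F /Defs.shift /=.
move: (admissible_upperS adm_w 0); rewrite add0r => ->; rewrite /gmap; congr pair.
by case: (upper (w 0)); case: (P (bar (w 0))); rewrite /= ?reflK.
Qed.

Lemma upper_G (z : ptA) : adm z.1 ->
  upper ((G P f z).1 0) = upper (z.1 0) (+) ~~ P (bar (z.1 0)).
Proof. by move=> adm_z; rewrite /= /Defs.shift (admissible_upperS adm_z). Qed.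

Lemma Pi_interior (S : set ptA) (z : ptA) :
  rel_interior adm S z -> rel_interior full (Pi @` S) (Pi z).
Proof.
move=> [z_sp [n [e [e_gt0 ballS]]]]; split; first exact: space_Pi.
exists n, e; split => // z' z'_sp near1 near2.
have zE := lift_ptK z_sp.1; move: (upper (z.1 0)) zE => b zE.
exists (lift_pt b z'); last exact: Pi_lift_pt.
apply: ballS; first exact: space_lift_pt.
  by move=> k hk; rewrite -zE; exact: (eq_on_lift_seq P b near1).
by rewrite -zE; case: b {zE} => //=; rewrite distr_refl.
Qed.

Lemma Pi_strip_bistrip (phi psi : (int -> 'I_(N + N)) -> R) :
  strip_bounds adm phi psi -> is_bistrip full (Pi @` strip adm phi psi).
Proof.
move=> bounds.
exists (fun xi => phi (lift_seq P xi false)), (fun xi => psi (lift_seq P xi false)),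
  (fun xi => refl (psi (lift_seq P xi true))), (fun xi => refl (phi (lift_seq P xi true))).
split; [|split].
- by move=> xi _; apply: bounds; exact: lift_seq_admissible.
- move=> xi _; have [phiI [psiI lt_phi_psi]] := bounds _ (lift_seq_admissible P xi true).
  by split; [exact: inI_refl | split; [exact: inI_refl | rewrite /refl; lra]].
rewrite image_Pi; last by move=> z [].
apply/seteqP; split=> [[xi x] [[] [_ /= [lo hi]]]|[xi x] [[_ /= [lo hi]]|[_ /= [lo hi]]]].
- by right; split => //=; move: lo hi; rewrite /refl; lra.
- by left.
- by exists false; split => //; exact: lift_seq_admissible.
- exists true; split; first exact: lift_seq_admissible.
  by move: lo hi; rewrite /= /refl; lra.
Qed.

Lemma Pi_attracting (S : set ptA) : S `<=` [set z | adm z.1] ->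
  attracting adm (G P f) S -> attracting full (F f) (Pi @` S).
Proof.
move=> S_adm attS _ [_ [z Sz <-] <-].
rewrite -Pi_G; last exact: S_adm.
by apply: Pi_interior; apply: attS; exists z.
Qed.

Lemma Pi_inverse_defined (S : set ptA) :
  inverse_defined_on adm (G P f) S -> inverse_defined_on full (F f) (Pi @` S).
Proof.
move=> invS _ [z Sz <-]; have [y y_sp <-] := invS _ Sz.
by exists (Pi y); [exact: space_Pi | rewrite Pi_G //; exact: y_sp.1].
Qed.

Lemma Pi_repelling (S : set ptA) : S `<=` [set z | adm z.1] ->
  repelling adm (G P f) S -> repelling full (F f) (Pi @` S).
Proof.
move=> S_adm [invS repS]; split; first exact: Pi_inverse_defined.
move=> z [z_sp [y Sy Pi_y]].
set b := upper (y.1 0) (+) ~~ P (z.1 0).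
have x_sp := space_lift_pt b z_sp.
have Gx_y : G P f (lift_pt b z) = y.
  apply: Pi_inj; [exact: admissible_shift x_sp.1 | exact: S_adm | |].
    by rewrite upper_G /=; [rewrite upper_lift_seq0 bar_lift_seq addbK | exact: x_sp.1].
  by rewrite Pi_G; [rewrite Pi_lift_pt | exact: x_sp.1].
by rewrite -(Pi_lift_pt b z); apply/Pi_interior/repS; split; last rewrite Gx_y.
Qed.

End Projection.

Theorem lemma3p9 (R : realType) (N : nat) (P : 'I_N -> bool)
  (f : 'I_N -> R -> R)
  (hf : forall i, C1_diffeo_onto_image (f i))
  (hP : forall i, P i -> orientation_preserving (f i))
  (hR : forall i, ~~ P i -> orientation_reversing (f i))
  (S : set (pt R 'I_(N + N))) :
  is_strip (admissible P) S ->
  (attracting (admissible P) (G P f) S ->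
     is_bistrip (@fullN N) (@Pi R N @` S) /\
     attracting (@fullN N) (F f) (@Pi R N @` S)) /\
  (repelling (admissible P) (G P f) S ->
     inverse_defined_on (@fullN N) (F f) (@Pi R N @` S) /\
     is_bistrip (@fullN N) (@Pi R N @` S) /\
     repelling (@fullN N) (F f) (@Pi R N @` S)).
Proof.
move=> [phi [psi [bounds ->]]].
have S_adm : strip (admissible P) phi psi `<=` [set z | admissible P z.1] by move=> z [].
split => [attS | repS].
  by split; [exact: Pi_strip_bistrip bounds | exact: Pi_attracting S_adm attS].
split; first exact: Pi_inverse_defined repS.1.
by split; [exact: Pi_strip_bistrip bounds | exact: Pi_repelling S_adm repS].
Qed.
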